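(* Let $n\ge1$ and $\mathbf{P}_A,\mathbf{P}_B,\mathbf{Q}_A,\mathbf{Q}_B\in\mathbb{R}^{n\times n}$ be symmetric positive definite; $\mathbf{C}_A=\mathbf{P}_A+\mathbf{Q}_A$, $\mathbf{C}_B=\mathbf{P}_B+\mathbf{Q}_B$. Let $\mathbf{K}=(\mathbf{K}_A,\mathbf{K}_B)$ satisfy $\mathbf{K}_A+\mathbf{K}_B=\mathbf{I}$ and let $\mathbf{B}_F$ be a symmetric positive definite matrix such that $\mathbf{B}_F\succeq\mathbf{C}_F(\mathbf{K},\mathbf{P}_{AB})$ for all $\mathbf{P}_{AB}\in\mathcal{A}_{\mathrm{Split}}$. Then $\mathcal{V}^*\subseteq\mathcal{E}(\mathbf{B}_F)$.
   Context: $\mathcal{A}_{\mathrm{Split}}=\{\mathbf{M}\in\mathbb{R}^{n\times n} : \begin{bmatrix}\mathbf{P}_A & \mathbf{M}\\ \mathbf{M}^\intercal & \mathbf{P}_B\end{bmatrix}\succeq 0\}$. $\mathbf{C}_F(\mathbf{K},\mathbf{P}_{AB})=\mathbf{K}_A\mathbf{C}_A\mathbf{K}_A^\intercal+\mathbf{K}_A\mathbf{P}_{AB}\mathbf{K}_B^\intercal+\mathbf{K}_B\mathbf{P}_{AB}^\intercal\mathbf{K}_A^\intercal+\mathbf{K}_B\mathbf{C}_B\mathbf{K}_B^\intercal$. For $\mathbf{P}_{AB}\in\mathcal{A}_{\mathrm{Split}}$ let $\mathbf{R}=\mathbf{C}_A+\mathbf{C}_B-\mathbf{P}_{AB}-\mathbf{P}_{AB}^\intercal$,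 $\mathbf{K}_A^*=(\mathbf{C}_B-\mathbf{P}_{AB}^\intercal)\mathbf{R}^{-1}$, $\mathbf{K}^*=(\mathbf{K}_A^*,\mathbf{I}-\mathbf{K}_A^* )$ and $\mathbf{C}_F^*(\mathbf{P}_{AB})=\mathbf{C}_F(\mathbf{K}^*,\mathbf{P}_{AB})$. For a symmetric positive definite $\mathbf{P}$, $\mathcal{E}(\mathbf{P})=\{\mathbf{x}\in\mathbb{R}^n:\mathbf{x}^\intercal\mathbf{P}^{-1}\mathbf{x}\le1\}$. Define $\mathcal{V}^*=\bigcup_{\mathbf{P}_{AB}\in\mathcal{A}_{\mathrm{Split}}}\mathcal{E}(\mathbf{C}_F^*(\mathbf{P}_{AB}))$. *)

From HB Require Import structures.
From mathcomp Require Import all_boot all_order all_algebra.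
Set Implicit Arguments. Unset Strict Implicit. Unset Printing Implicit Defensive.
Import Order.TTheory GRing.Theory Num.Theory.
Local Open Scope ring_scope.

Section Defs.
Variable R : realFieldType.

Definition psd (m : nat) (A : 'M[R]_m) : Prop :=
  A^T = A /\ forall x : 'cV[R]_m, 0 <= (x^T *m A *m x) 0 0.

Definition spd (m : nat) (A : 'M[R]_m) : Prop :=
  A^T = A /\ forall x : 'cV[R]_m, x != 0 -> 0 < (x^T *m A *m x) 0 0.

Definition loewner_ge (m : nat) (A B : 'M[R]_m) : Prop := psd (A - B).

Definition in_ASplit (n : nat) (PA PB M : 'M[R]_n) : Prop :=
  psd (block_mx PA M M^T PB).

Definition CF (n : nat) (KA KB CA CB PAB : 'M[R]_n) : 'M[R]_n :=
  KA *m CA *m KA^T + KA *m PAB *m KB^T + KB *m PAB^T *m KA^T + KB *m CB *m KB^T.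

Definition Rmat (n : nat) (CA CB PAB : 'M[R]_n) : 'M[R]_n :=
  CA + CB - PAB - PAB^T.

Definition KAstar (n : nat) (CA CB PAB : 'M[R]_n) : 'M[R]_n :=
  (CB - PAB^T) *m invmx (Rmat CA CB PAB).

Definition CFstar (n : nat) (CA CB PAB : 'M[R]_n) : 'M[R]_n :=
  CF (KAstar CA CB PAB) (1%:M - KAstar CA CB PAB) CA CB PAB.

Definition in_ellipsoid (n : nat) (P : 'M[R]_n) (x : 'cV[R]_n) : Prop :=
  (x^T *m invmx P *m x) 0 0 <= 1.

Definition in_Vstar (n : nat) (PA PB CA CB : 'M[R]_n) (x : 'cV[R]_n) : Prop :=
  exists PAB : 'M[R]_n, in_ASplit PA PB PAB /\ in_ellipsoid (CFstar CA CB PAB) x.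

End Defs.

From mathcomp Require Import all_boot all_order all_algebra.
From mathcomp Require Import ring lra.
Set Implicit Arguments. Unset Strict Implicit. Unset Printing Implicit Defensive.
Import Order.TTheory GRing.Theory Num.Theory.
Local Open Scope ring_scope.

(* Write X = [K  I - K].  Then
     C_F(K, P_AB) = X [[C_A, P_AB], [P_AB^T, C_B]] X^T,
   and completing the square in K gives
     C_F(K, P_AB) = C_F^⋆(P_AB) + (K - K^⋆) R (K - K^⋆)^T.
   For P_AB in A_Split the block matrix is the psd matrix
   [[P_A, P_AB], [P_AB^T, P_B]] plus diag(Q_A, Q_B) > 0, so R = C_F(I, -I, P_AB)
   and C_F^⋆(P_AB) are positive definite and
   B_F >= C_F(K, P_AB) >= C_F^⋆(P_AB) > 0.  Inversion is antitone on positive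
   definite matrices, so x^T B_F^-1 x <= x^T C_F^⋆(P_AB)^-1 x <= 1. *)

Section MxForm.
Variable R : comPzRingType.

Definition mxform m p (u : 'cV[R]_m) (A : 'M[R]_(m, p)) (v : 'cV[R]_p) : R :=
  (u^T *m A *m v) 0 0.

Lemma mxform0m m p (u : 'cV[R]_m) (v : 'cV[R]_p) : mxform u 0 v = 0.
Proof. by rewrite /mxform mulmx0 mul0mx mxE. Qed.

Lemma mxformDm m p (u : 'cV[R]_m) (A B : 'M_(m, p)) v :
  mxform u (A + B) v = mxform u A v + mxform u B v.
Proof. by rewrite /mxform mulmxDr mulmxDl mxE. Qed.

Lemma mxformBm m p (u : 'cV[R]_m) (A B : 'M_(m, p)) v :
  mxform u (A - B) v = mxform u A v - mxform u B v.
Proof. by rewrite /mxform mulmxBr mulmxBl !mxE. Qed.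

Lemma mxformBl m p (u1 u2 : 'cV[R]_m) (A : 'M_(m, p)) v :
  mxform (u1 - u2) A v = mxform u1 A v - mxform u2 A v.
Proof. by rewrite /mxform linearB /= !mulmxBl !mxE. Qed.

Lemma mxformBr m p (u : 'cV[R]_m) (A : 'M_(m, p)) (v1 v2 : 'cV_p) :
  mxform u A (v1 - v2) = mxform u A v1 - mxform u A v2.
Proof. by rewrite /mxform mulmxBr !mxE. Qed.

Lemma mxform_tr m p (u : 'cV[R]_m) (A : 'M_(m, p)) v :
  mxform u A v = mxform v A^T u.
Proof.
transitivity ((u^T *m A *m v)^T 0 0); first by rewrite mxE.
by rewrite !trmx_mul trmxK mulmxA.
Qed.

Lemma mxform_mulmx m p q r (u : 'cV[R]_m) (X : 'M_(m, p)) (A : 'M_(p, q))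
    (Y : 'M_(q, r)) v :
  mxform u (X *m A *m Y) v = mxform (X^T *m u) A (Y *m v).
Proof. by rewrite /mxform trmx_mul trmxK !mulmxA. Qed.

Lemma mxform_block m1 m2 p1 p2 (u1 : 'cV[R]_m1) (u2 : 'cV[R]_m2)
    (A : 'M_(m1, p1)) (B : 'M_(m1, p2)) (C : 'M_(m2, p1)) (D : 'M_(m2, p2))
    (v1 : 'cV_p1) (v2 : 'cV_p2) :
  mxform (col_mx u1 u2) (block_mx A B C D) (col_mx v1 v2) =
  mxform u1 A v1 + mxform u2 C v1 + (mxform u1 B v2 + mxform u2 D v2).
Proof.
by rewrite /mxform tr_col_mx mul_row_block mul_row_col !mulmxDl !mxE.
Qed.

End MxForm.

Section RowFree.
Variable F : fieldType.

Lemma row_free_row_mxl m p q (K : 'M[F]_(m, p)) (L : 'M[F]_(m, q)) :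
  row_free K -> row_free (row_mx K L).
Proof.
case/row_freeP=> B KB1; apply/row_freeP; exists (col_mx B 0).
by rewrite mul_row_col mulmx0 addr0.
Qed.

Lemma row_free_row_mx_sum1 m (K L : 'M[F]_m) :
  K + L = 1%:M -> row_free (row_mx K L).
Proof.
move=> KL1; apply/row_freeP; exists (col_mx 1%:M 1%:M).
by rewrite mul_row_col !mulmx1.
Qed.

End RowFree.

Section Psd.
Variable R : realFieldType.

Lemma spd_psd m (A : 'M[R]_m) : spd A -> psd A.
Proof.
move=> [symA posA]; split=> // x; have [->|x0] := eqVneq x 0.
  by rewrite trmx0 !mul0mx mxE.
exact/ltW/posA.
Qed.

Lemma psdD m (A B : 'M[R]_m) : psd A -> psd B -> psd (A + B).
Proof.
move=> [symA posA] [symB posB]; split; first by rewrite raddfD /= symA symB.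
move=> x; change (0 <= mxform x (A + B) x).
by rewrite mxformDm addr_ge0 ?posA ?posB.
Qed.

Lemma spd_psdD m (A B : 'M[R]_m) : psd A -> spd B -> spd (A + B).
Proof.
move=> [symA posA] [symB posB]; split; first by rewrite raddfD /= symA symB.
move=> x x0; change (0 < mxform x (A + B) x).
by rewrite mxformDm ltr_wpDl ?posA ?posB.
Qed.

Lemma spd_unitmx m (A : 'M[R]_m) : spd A -> A \in unitmx.
Proof.
move=> [_ posA]; rewrite unitmxE unitfE; apply/negP => /det0P[v v0 vA0].
have := posA v^T; rewrite trmx_eq0 trmxK vA0 mul0mx mxE ltxx.
by move/(_ v0).
Qed.

Lemma psd_cross_le m (A : 'M[R]_m) u v : psd A ->
  2 * mxform u A v <= mxform u A u + mxform v A v.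
Proof.
move=> [symA posA]; have : 0 <= mxform (u - v) A (u - v) := posA (u - v).
rewrite !(mxformBl, mxformBr) [mxform v A u]mxform_tr symA; lra.
Qed.

Lemma psd_congr m p (A : 'M[R]_p) (X : 'M[R]_(m, p)) :
  psd A -> psd (X *m A *m X^T).
Proof.
move=> [symA posA]; split; first by rewrite !trmx_mul trmxK symA mulmxA.
move=> x; change (0 <= mxform x (X *m A *m X^T) x).
by rewrite mxform_mulmx; apply: posA.
Qed.

Lemma spd_congr m p (A : 'M[R]_p) (X : 'M[R]_(m, p)) :
  spd A -> row_free X -> spd (X *m A *m X^T).
Proof.
move=> [symA posA] freeX; split; first by rewrite !trmx_mul trmxK symA mulmxA.
move=> x x0; change (0 < mxform x (X *m A *m X^T) x); rewrite mxform_mulmx.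
by apply: posA; rewrite -trmx_eq0 trmx_mul trmxK mulmx_free_eq0 // trmx_eq0.
Qed.

Lemma spd_block_diag m p (A : 'M[R]_m) (D : 'M[R]_p) :
  spd A -> spd D -> spd (block_mx A 0 0 D).
Proof.
move=> spdA spdD; have [symA posA] := spdA; have [symD posD] := spdD.
split; first by rewrite tr_block_mx symA symD !trmx0.
move=> x; rewrite -[x]vsubmxK col_mx_eq0 negb_and => x0.
change (0 < mxform (col_mx (usubmx x) (dsubmx x)) (block_mx A 0 0 D)
                   (col_mx (usubmx x) (dsubmx x))).
rewrite mxform_block !mxform0m add0r addr0.
have [_ geA] := spd_psd spdA; have [_ geD] := spd_psd spdD.
case/orP: x0 => [/posA posu | /posD posd].
  exact: ltr_pwDl posu (geD _).
exact: ltr_wpDl (geA _) posd.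
Qed.

Lemma loewner_ge_trans m (A B C : 'M[R]_m) :
  loewner_ge A B -> loewner_ge B C -> loewner_ge A C.
Proof. by move=> AB BC; rewrite /loewner_ge -(subrKA B); apply: psdD. Qed.

Lemma loewner_ge_spd m (B C : 'M[R]_m) : spd C -> loewner_ge B C -> spd B.
Proof. by move=> spdC BC; rewrite -(subrK C B); apply: spd_psdD. Qed.

Lemma mxform_invmx m (A : 'M[R]_m) x : A \in unitmx -> A^T = A ->
  mxform x (invmx A) x = mxform (invmx A *m x) A (invmx A *m x).
Proof.
move=> unitA symA; rewrite /mxform -{1}(mulKVmx unitA x) trmx_mul symA.
by rewrite -!mulmxA mulKVmx.
Qed.

Lemma loewner_ge_invmx m (B C : 'M[R]_m) x : spd C -> loewner_ge B C ->
  mxform x (invmx B) x <= mxform x (invmx C) x.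
Proof.
(* With B y = C w = x the two sides are y^T B y and w^T C w, and
   y^T B y = w^T C y; then B >= C and 2 w^T C y <= w^T C w + y^T C y conclude. *)
move=> spdC BC; have spdB := loewner_ge_spd spdC BC.
have [[symC _] [symB _]] := (spdC, spdB).
have [unitB unitC] := (spd_unitmx spdB, spd_unitmx spdC).
rewrite !mxform_invmx //; set y := invmx B *m x; set w := invmx C *m x.
have cross := psd_cross_le w y (spd_psd spdC).
have yBCy : 0 <= mxform y (B - C) y := BC.2 y.
have wCy : mxform w C y = mxform y B y.
  by rewrite mxform_tr symC /mxform -!mulmxA !mulKVmx.
rewrite mxformBm in yBCy; lra.
Qed.

End Psd.

Section Fusion.
Variable R : realFieldType.
Variable n : nat.
Implicit Types (K L CA CB P : 'M[R]_n).

Lemma CF_block K L CA CB P :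
  CF K L CA CB P = row_mx K L *m block_mx CA P P^T CB *m (row_mx K L)^T.
Proof.
rewrite /CF tr_row_mx mul_row_block mul_row_col !mulmxDl.
by rewrite -addrA addrACA.
Qed.

Lemma Rmat_CF CA CB P : Rmat CA CB P = CF 1%:M (- 1%:M) CA CB P.
Proof.
rewrite /CF /Rmat raddfN /= trmx1 !(mul1mx, mulmx1, mulNmx, mulmxN) opprK.
by rewrite [RHS]addrAC [CA - P + CB]addrAC.
Qed.

Lemma CF_ASplit_spd PA PB QA QB P K L : in_ASplit PA PB P ->
  spd QA -> spd QB -> row_free (row_mx K L) ->
  spd (CF K L (PA + QA) (PB + QB) P).
Proof.
move=> psdP spdQA spdQB freeKL; rewrite CF_block.
have -> : block_mx (PA + QA) P P^T (PB + QB) =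
          block_mx PA P P^T PB + block_mx QA 0 0 QB.
  by rewrite add_block_mx !addr0.
exact: spd_congr (spd_psdD psdP (spd_block_diag spdQA spdQB)) freeKL.
Qed.

Lemma CF_compl K CA CB P :
  CF K (1%:M - K) CA CB P =
  K *m Rmat CA CB P *m K^T - K *m (CB - P) - (CB - P^T) *m K^T + CB.
Proof.
rewrite /CF /Rmat raddfB /= trmx1.
rewrite !(mulmxBl, mulmxBr, mulmxDl, mulmxDr, mul1mx, mulmx1, mulNmx).
by apply/matrixP=> i j; rewrite !mxE; ring.
Qed.

Lemma CF_completed_square K CA CB P :
  CA^T = CA -> CB^T = CB -> Rmat CA CB P \in unitmx ->
  CF K (1%:M - K) CA CB P = CFstar CA CB P +
    (K - KAstar CA CB P) *m Rmat CA CB P *m (K - KAstar CA CB P)^T.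
Proof.
move=> symA symB unitR; rewrite /CFstar !CF_compl.
set S := KAstar CA CB P; set Rm := Rmat CA CB P.
have symR : Rm^T = Rm.
  by rewrite /Rm /Rmat !raddfB raddfD /= trmxK symA symB addrAC.
have SR : S *m Rm = CB - P^T by rewrite mulmxKV.
have RS : Rm *m S^T = CB - P.
  by rewrite -symR -trmx_mul SR raddfB /= trmxK symB.
clearbody Rm S.
have -> : S *m Rm *m S^T = (CB - P^T) *m S^T by rewrite SR.
have -> : S *m (CB - P) = (CB - P^T) *m S^T by rewrite -RS mulmxA SR.
have -> : (K - S) *m Rm *m (K - S)^T =
    K *m Rm *m K^T - K *m (CB - P) - (CB - P^T) *m K^T + (CB - P^T) *m S^T.
  rewrite raddfB /= mulmxBr [(K - S) *m Rm]mulmxBl.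
  rewrite [(K *m Rm - _) *m K^T]mulmxBl [(K *m Rm - _) *m S^T]mulmxBl SR.
  rewrite -[K *m Rm *m S^T]mulmxA RS opprB addrA addrAC.
  by rewrite [K *m Rm *m K^T - _ - _]addrAC.
by rewrite subrr sub0r [RHS]addrC [RHS]addrA addrK.
Qed.

Lemma CFstar_min K CA CB P : CA^T = CA -> CB^T = CB -> spd (Rmat CA CB P) ->
  loewner_ge (CF K (1%:M - K) CA CB P) (CFstar CA CB P).
Proof.
move=> symA symB spdR; rewrite /loewner_ge.
rewrite (CF_completed_square K symA symB (spd_unitmx spdR)) addrC addKr.
exact: psd_congr (spd_psd spdR).
Qed.

End Fusion.

Theorem lemma2 (R : realFieldType) (n : nat) (hn : (0 < n)%N)
  (PA PB QA QB KA KB BF : 'M[R]_n) :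
  spd PA -> spd PB -> spd QA -> spd QB ->
  KA + KB = 1%:M ->
  spd BF ->
  (forall PAB : 'M[R]_n, in_ASplit PA PB PAB ->
     loewner_ge BF (CF KA KB (PA + QA) (PB + QB) PAB)) ->
  forall x : 'cV[R]_n,
    in_Vstar PA PB (PA + QA) (PB + QB) x -> in_ellipsoid BF x.
Proof.
move=> spdPA spdPB spdQA spdQB KAB1 _ BF_ge x [P [ASplitP xE]].
have symA : (PA + QA)^T = PA + QA by rewrite raddfD /= spdPA.1 spdQA.1.
have symB : (PB + QB)^T = PB + QB by rewrite raddfD /= spdPB.1 spdQB.1.
have spdR : spd (Rmat (PA + QA) (PB + QB) P).
  rewrite Rmat_CF; apply: CF_ASplit_spd => //.
  by apply: row_free_row_mxl; rewrite row_free_unit unitmx1.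
have spdCs : spd (CFstar (PA + QA) (PB + QB) P).
  apply: CF_ASplit_spd => //.
  by apply: row_free_row_mx_sum1; rewrite addrC subrK.
have BF_Cs : loewner_ge BF (CFstar (PA + QA) (PB + QB) P).
  apply: loewner_ge_trans (BF_ge P ASplitP) _.
  have -> : KB = 1%:M - KA by rewrite -KAB1 addrC addKr.
  exact: CFstar_min.
exact: le_trans (loewner_ge_invmx x spdCs BF_Cs) xE.
Qed.
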